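(* There exist absolute constants $w_0>0$ and $c>0$ such that for every $w\ge w_0$ the following holds. Let $\tilde x:[0,1]\to\mathbb R$ solve the guided ODE $$\tilde x'(s)=(w+1)-w\tanh\bigl(s\,\tilde x(s)\bigr),\qquad \tilde x(0)=x,$$ with random initialization $x\sim\mathcal N(0,1)$. Then $$\Pr[\tilde x(1)\ge0]\ge1-e^{-cw^2}\qquad\text{and}\qquad \Pr\Bigl[\tilde x(1)\ge\frac{\sqrt{w+1}}{4}\Bigr]\ge1-e^{-cw}.$$
   Context: This ODE is the guided probability flow ODE with guidance parameter $w$, guided toward the component $z=+1$, for the Gaussian mixture $\frac12\mathcal N(1,1)+\frac12\mathcal N(-1,1)$ on $\mathbb R$: in the original time variable $t\in[0,T]$ with $a_t=e^{t-T}$, it reads $x'(t)=x(t)-(w+1)(x(t)-a_t)+w\bigl(x(t)-a_t\tanh(a_tx(t))\bigr)$ with $x(0)\sim\mathcal N(0,1)$; the displayed ODE is obtained via the change of variables $s=a_t$, $\tilde x(s)=x(T+\ln s)$ and letting $T\to\infty$, so that $s$ ranges over $[0,1]$ and $\tilde x(1)$ is the output sample. *)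

From HB Require Import structures.
From mathcomp Require Import all_boot all_order all_algebra.
From mathcomp Require Import all_classical all_reals all_analysis.
Set Implicit Arguments. Unset Strict Implicit. Unset Printing Implicit Defensive.
Import Order.TTheory GRing.Theory Num.Theory.
Import numFieldTopology.Exports numFieldNormedType.Exports.
Local Open Scope classical_set_scope.
Local Open Scope ring_scope.

Definition tanh {R : realType} (y : R) : R :=
  (expR y - expR (- y)) / (expR y + expR (- y)).

Definition guided_flow {R : realType} (w : R) (phi : R -> R -> R) : Prop :=
  forall x0 : R,
    phi x0 0 = x0 /\
    {within `[0, 1], continuous (phi x0)} /\
    (forall s : R, 0 < s < 1 ->
       is_derive s 1 (phi x0) ((w + 1) - w * tanh (s * phi x0 s))).

(* The drift (w+1) - w tanh(s x) always exceeds 1, so each trajectory is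
   nondecreasing; while it is nonpositive the drift exceeds w+1, so any start
   x0 >= -(w+1) ends at a nonnegative value.  While s x(s) <= 1/4 we have
   tanh(s x(s)) <= 1/2 and the drift exceeds w/2; over the time span
   1/sqrt(w+1) this lifts any start x0 >= -sqrt(w+1)/8 above sqrt(w+1)/4.
   Both events thus contain a Gaussian half-line {x >= -a}, and the
   standard normal tail below -a is at most 2 exp(-3a^2/8), obtained by
   comparing the N(0,1) density with the N(0,2) density on that tail. *)

From HB Require Import structures.
From mathcomp Require Import all_boot all_order all_algebra.
From mathcomp Require Import all_classical all_reals all_analysis.
From mathcomp Require Import lra measurable_realfun lebesgue_integral probability.
Import Order.TTheory GRing.Theory Num.Theory.
Import numFieldTopology.Exports numFieldNormedType.Exports.
Local Open Scope classical_set_scope.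
Local Open Scope ring_scope.

Section tanh_bounds.
Context {R : realType}.
Implicit Types y : R.

Lemma tanh_le1 y : tanh y <= 1.
Proof.
rewrite /tanh ler_pdivrMr ?addr_gt0 ?expR_gt0 // mul1r.
have := expR_gt0 (- y); lra.
Qed.

Lemma tanh_le0 y : y <= 0 -> tanh y <= 0.
Proof.
move=> y_le0; rewrite /tanh ler_pdivrMr ?addr_gt0 ?expR_gt0 // mul0r.
have : expR y <= expR (- y) by rewrite ler_expR; lra.
lra.
Qed.

Lemma tanh_le_half y : y <= 1 / 4 -> tanh y <= 1 / 2.
Proof.
move=> y_le; rewrite /tanh ler_pdivrMr ?addr_gt0 ?expR_gt0 //.
(* Reduce to e^{1/2} <= 2, which follows from e^{-1/2} >= 1 - 1/2. *)
have ey_le : expR y <= expR (1 / 2) * expR (- (1 / 4)).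
  by rewrite -expRD ler_expR; lra.
have eNy_ge : expR (- (1 / 4)) <= expR (- y) by rewrite ler_expR; lra.
have e_half_inv : expR (1 / 2 : R) * expR (- (1 / 2)) = 1.
  by rewrite -expRD addrN expR0.
have eN_half_ge : 1 / 2 <= expR (- (1 / 2) : R).
  by have := @expR_ge1Dx R (- (1 / 2)); lra.
have e_half_le2 : expR (1 / 2 : R) <= 2.
  by have := ler_wpM2l (ltW (expR_gt0 (1 / 2 : R))) eN_half_ge; lra.
have := expR_gt0 (- (1 / 4) : R).
have := ler_wpM2r (ltW (expR_gt0 (- (1 / 4)))) e_half_le2; lra.
Qed.

End tanh_bounds.

Lemma expRN_mul2_le {R : realType} (u v : R) :
  1 <= u - v -> 2 * expR (- u) <= expR (- v).
Proof.
move=> uv; have -> : - v = (u - v) + - u by lra.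
rewrite expRD; apply: ler_wpM2r; first exact/ltW/expR_gt0.
have := expR_ge1Dx (u - v); lra.
Qed.

Definition guided_drift {R : realType} (w s y : R) : R := (w + 1) - w * tanh (s * y).

Lemma guided_drift_ge1 {R : realType} (w s y : R) : 0 <= w -> 1 <= guided_drift w s y.
Proof.
move=> w_ge0; rewrite /guided_drift.
by have := ler_wpM2l w_ge0 (tanh_le1 (s * y)); lra.
Qed.

Section guided_flow_bounds.
Context {R : realType}.
Variables (w : R) (phi : R -> R -> R).
Hypotheses (flow : guided_flow w phi) (w_ge0 : 0 <= w).

Lemma guided_flow0 x0 : phi x0 0 = x0.
Proof. by case: (flow x0). Qed.

Lemma guided_flow_increment_ge x0 a b r : 0 <= a -> a <= b -> b <= 1 ->
  (forall s, a < s -> s < b -> r <= guided_drift w s (phi x0 s)) ->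
  r * (b - a) <= phi x0 b - phi x0 a.
Proof.
move=> a_ge0 ab b_le1 drift_ge.
case: (ltgtP a b) ab => // [a_lt_b|->] _; last by rewrite !subrr mulr0.
have [_ [phi_cont phi_deriv]] := flow x0.
have deriv_ab x : x \in `]a, b[ -> is_derive x 1 (phi x0) (guided_drift w x (phi x0 x)).
  by rewrite in_itv /= => /andP[ax xb]; apply: phi_deriv; apply/andP; split; lra.
have cont_ab : {within `[a, b], continuous (phi x0)}.
  apply: continuous_subspaceW phi_cont => x /=; rewrite !in_itv /= => /andP[ax xb].
  by apply/andP; split; lra.
have [c /[!in_itv] /= /andP[ac cb] ->] := MVT a_lt_b deriv_ab cont_ab.
by apply: ler_wpM2r; [lra | exact: drift_ge].
Qed.

Lemma guided_flow_nondecreasing x0 a b : 0 <= a -> a <= b -> b <= 1 ->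
  phi x0 a <= phi x0 b.
Proof.
move=> a_ge0 ab b_le1.
have := @guided_flow_increment_ge x0 a b 0 a_ge0 ab b_le1.
by rewrite mul0r subr_ge0; apply=> s _ _; have := @guided_drift_ge1 R w s (phi x0 s) w_ge0; lra.
Qed.

Lemma guided_flow_end_ge0 x0 : - (w + 1) <= x0 -> 0 <= phi x0 1.
Proof.
move=> x0_ge; rewrite leNgt; apply/negP => end_lt0.
have drift_ge s : 0 < s -> s < 1 -> w + 1 <= guided_drift w s (phi x0 s).
  move=> s_gt0 s_lt1; rewrite /guided_drift.
  have phi_le : phi x0 s <= phi x0 1 by apply: guided_flow_nondecreasing; lra.
  have tanh_le : tanh (s * phi x0 s) <= 0.
    by apply: tanh_le0; apply: mulr_ge0_le0; lra.
  by have := ler_wpM2l w_ge0 tanh_le; lra.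
have := @guided_flow_increment_ge x0 0 1 (w + 1) (lexx 0) ler01 (lexx 1) drift_ge.
by rewrite guided_flow0 subr0 mulr1; lra.
Qed.

Lemma guided_flow_end_ge_sqrt x0 : 3 <= w -> - (Num.sqrt (w + 1) / 8) <= x0 ->
  Num.sqrt (w + 1) / 4 <= phi x0 1.
Proof.
move=> w_ge3 x0_ge; set q := Num.sqrt (w + 1) in x0_ge *.
have qq : q * q = w + 1 by rewrite -expr2 sqr_sqrtr //; lra.
have q_gt0 : 0 < q by rewrite sqrtr_gt0; lra.
have q_ge2 : 2 <= q.
  by rewrite leNgt; apply/negP => q_lt2; have := ltr_pM (ltW q_gt0) (ltW q_gt0) q_lt2 q_lt2; lra.
set t := q^-1.
have tq : t * q = 1 by rewrite mulVf // gt_eqF.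
have t_gt0 : 0 < t by rewrite invr_gt0.
have t_le1 : t <= 1 by have := ler_wpM2l (ltW t_gt0) q_ge2; lra.
case: (lerP (q / 4) (phi x0 t)) => [reached | below].
  by apply: (le_trans reached); apply: guided_flow_nondecreasing; lra.
(* Up to time t the trajectory stays below q/4, so s * phi x0 s <= t * q/4 = 1/4. *)
have drift_ge s : 0 < s -> s < t -> w / 2 <= guided_drift w s (phi x0 s).
  move=> s_gt0 s_lt; rewrite /guided_drift.
  have phi_le : phi x0 s <= phi x0 t by apply: guided_flow_nondecreasing; lra.
  have arg_le : s * phi x0 s <= 1 / 4.
    case: (lerP 0 (phi x0 s)) => [phi_ge0 | phi_lt0].
      have : s * phi x0 s <= t * (q / 4).
        by apply: (le_trans (ler_wpM2r phi_ge0 (ltW s_lt))); apply: ler_wpM2l; lra.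
      lra.
    by have := mulr_ge0_le0 (ltW s_gt0) (ltW phi_lt0); lra.
  have tanh_le : tanh (s * phi x0 s) <= 1 / 2 by exact: tanh_le_half.
  by have := ler_wpM2l w_ge0 tanh_le; lra.
have := @guided_flow_increment_ge x0 0 t (w / 2) (lexx 0) (ltW t_gt0) t_le1 drift_ge.
rewrite guided_flow0 subr0 => increment; exfalso.
have : 3 / 8 * q <= w / 2 * t.
  rewrite -(ler_pM2r q_gt0) -[w / 2 * t * q]mulrA tq mulr1; lra.
lra.
Qed.

End guided_flow_bounds.

Lemma ge0_integral_le_subset {d : measure_display} {T : measurableType d}
    {R : realType} (mu : {measure set T -> \bar R}) (f : T -> \bar R) (A B : set T) :
  (forall x, (0 <= f x)%E) -> B `<=` A ->
  (\int[mu]_(x in B) f x <= \int[mu]_(x in A) f x)%E.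
Proof.
move=> f_ge0 BA; rewrite !ge0_integralE //.
apply: ereal_sup_le => _ [h /= h_le <-]; exists h => //= x.
apply: (le_trans (h_le x)); rewrite /patch.
case: ifPn => //; case: ifPn => // /negP xNA /[!inE] xB.
by exfalso; apply: xNA; rewrite inE; exact: BA.
Qed.

Section gaussian_tail.
Context {R : realType}.

Lemma normal_peak1 : normal_peak (1 : R) = 2 * normal_peak 2.
Proof.
rewrite /normal_peak expr1n mul1r.
have -> : (2 : R) ^+ 2 * pi *+ 2 = 2 ^+ 2 * (pi *+ 2) by rewrite -mulrnAr.
by rewrite sqrtrM ?sqr_ge0 // sqrtr_sqr ger0_norm // invfM mulrA divff ?mul1r.
Qed.

Lemma normal_pdf01_tail_le (a x : R) : 0 <= a -> x < - a ->
  normal_pdf 0 1 x <= 2 * expR (- (3 / 8) * a ^+ 2) * normal_pdf 0 2 x.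
Proof.
move=> a_ge0 x_lt.
rewrite !normal_pdfE ?oner_neq0 ?pnatr_eq0 // normal_peak1 /normal_fun !subr0.
have sq_le : a ^+ 2 <= x ^+ 2.
  rewrite -ler_sqrt ?sqr_ge0 // !sqrtr_sqr ger0_norm // ltr0_norm; lra.
have -> : - x ^+ 2 / (1 ^+ 2 *+ 2) = - (3 / 8) * x ^+ 2 + - x ^+ 2 / (2 ^+ 2 *+ 2).
  have -> : (1 : R) ^+ 2 *+ 2 = 2 by rewrite expr1n.
  have -> : (2 : R) ^+ 2 *+ 2 = 8 by rewrite expr2 -mulr_natr; lra.
  lra.
rewrite expRD.
have : expR (- (3 / 8) * x ^+ 2) <= expR (- (3 / 8) * a ^+ 2) by rewrite ler_expR; lra.
have := normal_peak_ge0 (2 : R).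
have := expR_ge0 (- x ^+ 2 / (2 ^+ 2 *+ 2)).
have := expR_ge0 (- (3 / 8) * x ^+ 2).
set P := normal_peak _; set E1 := expR (- (3 / 8) * x ^+ 2).
set E2 := expR (- _ / _); set E3 := expR _ => E1_ge0 E2_ge0 P_ge0 E1_le.
by have := ler_wpM2r (mulr_ge0 P_ge0 E2_ge0) E1_le; lra.
Qed.

Lemma normal_prob01_tail_le (a : R) : 0 <= a ->
  (normal_prob 0 1 [set` `]-oo, (- a)%R[] <= (2 * expR (- (3 / 8) * a ^+ 2))%:E)%E.
Proof.
move=> a_ge0; set k := 2 * expR _.
have k_ge0 : 0 <= k by rewrite mulr_ge0 ?expR_ge0.
apply: (@le_trans _ _ (\int[lebesgue_measure]_(x in [set` `]-oo, (- a)%R[]) (k * normal_pdf 0 2 x)%:E)%E).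
  apply: ge0_le_integral => //.
  - by move=> x _; rewrite lee_fin normal_pdf_ge0.
  - by apply/measurable_EFinP/measurable_funTS; exact: measurable_normal_pdf.
  - by apply/measurable_EFinP/measurable_funTS; apply: measurable_funM => //; exact: measurable_normal_pdf.
  - by move=> x /=; rewrite in_itv /= => x_lt; rewrite lee_fin normal_pdf01_tail_le.
apply: (@le_trans _ _ (\int[lebesgue_measure]_(x in setT) (k * normal_pdf 0 2 x)%:E)%E).
  apply: ge0_integral_le_subset => // x.
  by rewrite lee_fin mulr_ge0 // normal_pdf_ge0.
under eq_integral do rewrite EFinM.
rewrite ge0_integralZl //=.
- by rewrite integral_normal_pdf mule1.
- by apply/measurable_EFinP; exact: measurable_normal_pdf.
- by move=> x _; rewrite lee_fin normal_pdf_ge0.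
Qed.

Lemma normal_prob01_ge_of_halfline (A : set R) (a : R) : 0 <= a ->
  (forall x, - a <= x -> A x) ->
  ((1 - 2 * expR (- (3 / 8) * a ^+ 2))%:E <= normal_prob 0 1 A)%E.
Proof.
move=> a_ge0 halfline_sub.
set C := [set` `]-oo, (- a)%R[].
apply: (@le_trans _ _ (normal_prob 0 1 (~` C))).
  rewrite probability_setC; last exact: measurable_itv.
  by rewrite EFinB leeB // normal_prob01_tail_le.
apply: ge0_integral_le_subset => [x|x /= xNC]; first by rewrite lee_fin normal_pdf_ge0.
by apply: halfline_sub; rewrite leNgt; apply/negP => x_lt; apply: xNC.
Qed.

End gaussian_tail.

Theorem theorem4p1 (R : realType) :
  exists w0 : R, exists c : R, 0 < w0 /\ 0 < c /\
  forall w : R, w0 <= w ->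
  forall phi : R -> R -> R, guided_flow w phi ->
    ((1 - expR (- c * w ^+ 2))%:E <= normal_prob 0%R 1%R [set x | (0 <= phi x 1)%R])%E /\
    ((1 - expR (- c * w))%:E <=
       normal_prob 0%R 1%R [set x | (Num.sqrt (w + 1) / 4 <= phi x 1)%R])%E.
Proof.
exists 256, (1 / 512); do 2 (split; first lra).
move=> w w_ge phi flow; have w_ge0 : 0 <= w by lra.
split.
- have halfline_sub x : - (w + 1) <= x -> 0 <= phi x 1.
    exact: guided_flow_end_ge0.
  apply: le_trans (@normal_prob01_ge_of_halfline _ [set x | 0 <= phi x 1] (w + 1) (ltac:(lra)) halfline_sub).
  rewrite lee_fin lerB // !mulNr; apply: expRN_mul2_le.
  by rewrite !expr2; have := mulr_ge0 w_ge0 w_ge0; lra.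
- set q := Num.sqrt (w + 1).
  have q2 : q ^+ 2 = w + 1 by rewrite sqr_sqrtr //; lra.
  have q_ge0 : 0 <= q := sqrtr_ge0 _.
  have halfline_sub x : - (q / 8) <= x -> q / 4 <= phi x 1.
    by move=> x_ge; apply: guided_flow_end_ge_sqrt => //; lra.
  apply: le_trans (@normal_prob01_ge_of_halfline _ [set x | q / 4 <= phi x 1] (q / 8) (ltac:(lra)) halfline_sub).
  rewrite lee_fin lerB // !mulNr; apply: expRN_mul2_le.
  by rewrite expr_div_n q2; lra.
Qed.
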